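(* Let $F_R(n)$ be the $n\times n$ Fibonacci--Redheffer matrix. Then, as $n\to\infty$, \[ \det(F_R(n))\sim C_0\,\phi^{\frac{n(n+1)}{2}}\,5^{-\frac{n}{2}}, \] where $C_0=C\cdot C_\phi\approx -0.7921376$, with $C=\lim_{n\to\infty}\sum_{k=1}^n\frac{\mu(k)}{F_k}$ and \[ C_\phi=\prod_{k=1}^{\infty}\left(1-b^k\right)\approx 1.226742,\qquad b=-\phi^{-2}. \]
   Context: The Fibonacci numbers are $F_1=F_2=1$, $F_n=F_{n-1}+F_{n-2}$ for $n\ge 3$, and $\phi=\frac{1+\sqrt5}{2}$ is the golden ratio. The Fibonacci--Redheffer matrix $F_R(n)=[F_R(i,j)]_{i,j=1}^n$ is defined by $F_R(i,j)=1$ if $j=1$; $F_R(i,j)=F_i$ if $i\mid j$; and $F_R(i,j)=0$ otherwise. $\mu$ denotes the Möbius function. For sequences, $a_n\sim b_n$ means $\lim_{n\to\infty} b_n/a_n=1$. *)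

From HB Require Import structures.
From mathcomp Require Import all_boot all_order all_algebra.
From mathcomp Require Import all_classical all_reals all_analysis.
Set Implicit Arguments. Unset Strict Implicit. Unset Printing Implicit Defensive.
Import Order.TTheory GRing.Theory Num.Theory.
Local Open Scope ring_scope.

Fixpoint fib (n : nat) : nat :=
  match n with
  | 0 => 0
  | 1 => 1
  | (m.+1 as k).+1 => fib k + fib m
  end.

Definition squarefree (n : nat) : bool :=
  (0 < n)%N && all (fun p => logn p n <= 1)%N (primes n).
Definition mobius (n : nat) : int :=
  if squarefree n then (-1) ^+ size (primes n) else 0.

(* Fibonacci--Redheffer matrix, with 1-based indices i = i0+1, j = j0+1:
   F_R(i,j) = 1 if j = 1; F_i if i | j; 0 otherwise. *)
Definition fibRedheffer (R : pzRingType) (n : nat) : 'M[R]_n :=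
  \matrix_(i < n, j < n)
    if j.+1 == 1%N then 1
    else if (i.+1 %| j.+1)%N then (fib i.+1)%:R else 0.

Definition golden (R : realType) : R := (1 + Num.sqrt 5) / 2.

(** Adding to the first row the
combination of all rows with coefficients [mu(k)/F_k] clears that row except
for its first entry, by the Moebius identity [sum_(d | m) mu(d) = [m = 1]];
what remains is triangular, whence
[det F_R(n) = (prod_(k <= n) F_k) * sum_(k <= n) mu(k)/F_k].  Binet's formula
[F_k = phi^k/sqrt 5 * (1 - b^k)] turns the product into
[phi^(n(n+1)/2) 5^(-n/2) prod_(k <= n) (1 - b^k)].  Both the Moebius series and
the product converge geometrically, and their limits are nonzero
([C <= -1/10], [C_phi >= 1/3]), so the quotient tends to 1. *)

From HB Require Import structures.
From mathcomp Require Import all_boot all_order all_algebra.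
From mathcomp Require Import all_classical all_reals all_analysis.
From mathcomp Require Import ring lra.
Set Implicit Arguments. Unset Strict Implicit. Unset Printing Implicit Defensive.
Import Order.TTheory GRing.Theory Num.Theory numFieldNormedType.Exports.
Local Open Scope classical_set_scope.
Local Open Scope ring_scope.

Lemma squarefreeP n :
  (0 < n)%N -> reflect (forall p, logn p n <= 1)%N (squarefree n).
Proof.
move=> n_gt0; rewrite /squarefree n_gt0; apply: (iffP allP) => sqf_n p //.
have [/sqf_n //|] := boolP (p \in primes n).
by rewrite -logn_gt0 -leqNgt => /leq_trans->.
Qed.

Lemma mobius_mul_prime_dvd p e : prime p -> (p %| e)%N -> mobius (p * e) = 0.
Proof.
move=> p_pr p_dvd_e; have [->|e_gt0] := posnP e; first by rewrite muln0.
have pe_gt0 : (0 < p * e)%N by rewrite muln_gt0 prime_gt0.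
rewrite /mobius; case: (squarefreeP pe_gt0) => // /(_ p).
rewrite lognM ?(prime_gt0 p_pr) // logn_prime // eqxx ltnS leqNgt.
by rewrite logn_gt0 mem_primes p_pr e_gt0 p_dvd_e.
Qed.

Lemma mobius_mul_prime p e :
  prime p -> ~~ (p %| e)%N -> mobius (p * e) = - mobius e.
Proof.
move=> p_pr p_ndvd_e; have [->|e_gt0] := posnP e; first by rewrite muln0 /mobius /= oppr0.
have p_gt0 := prime_gt0 p_pr.
have logn_p_e : logn p e = 0%N.
  by apply/eqP; rewrite -leqn0 leqNgt logn_gt0 mem_primes p_pr e_gt0.
have sqf_pe : squarefree (p * e) = squarefree e.
  have pe_gt0 : (0 < p * e)%N by rewrite muln_gt0 p_gt0.
  apply/(squarefreeP pe_gt0)/(squarefreeP e_gt0).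
    by move=> sqf q; apply: leq_trans (sqf q); rewrite lognM // leq_addl.
  move=> sqf q; rewrite lognM // logn_prime //.
  by case: eqP => [->|]; rewrite ?logn_p_e ?sqf.
have size_primes_pe : size (primes (p * e)) = (size (primes e)).+1.
  have /perm_size -> // : perm_eq (primes (p * e)) (p :: primes e).
  apply: uniq_perm; first exact: primes_uniq.
    by rewrite /= primes_uniq andbT -logn_gt0 logn_p_e.
  by move=> q; rewrite primesM // primes_prime // !inE.
by rewrite /mobius sqf_pe size_primes_pe; case: ifP; rewrite ?oppr0 // exprS mulN1r.
Qed.

Lemma norm_mobius_le1 (R : numDomainType) k : `|(mobius k)%:~R : R| <= 1.
Proof.
rewrite /mobius; case: ifP => _; last by rewrite normr0 ler01.
by rewrite rmorphXn rmorphN1 normrX normrN normr1 expr1n.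
Qed.

Section BigDivisors.
Variable V : nmodType.

Lemma big_divisors_mul_dvd p m (F : nat -> V) : (0 < p)%N -> (0 < m)%N ->
  \sum_(d <- divisors (p * m) | (p %| d)%N) F d =
  \sum_(e <- divisors m) F (p * e)%N.
Proof.
move=> p_gt0 m_gt0; have pm_gt0 : (0 < p * m)%N by rewrite muln_gt0 p_gt0.
rewrite -big_filter (perm_big [seq (p * e)%N | e <- divisors m]) ?big_map //.
apply: uniq_perm; first by rewrite filter_uniq // divisors_uniq.
  by rewrite map_inj_uniq ?divisors_uniq // => x y /eqP; rewrite eqn_pmul2l // => /eqP.
move=> d; rewrite mem_filter -dvdn_divisors //; apply/andP/mapP => [[/dvdnP[e ->]]|[e]].
  by rewrite mulnC dvdn_pmul2l // dvdn_divisors // => e_dvd; exists e; rewrite // mulnC.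
by rewrite -dvdn_divisors // => e_dvd ->; rewrite dvdn_mulr // dvdn_pmul2l.
Qed.

Lemma big_divisors_mul_ndvd p m (F : nat -> V) : prime p -> (0 < m)%N ->
  \sum_(d <- divisors (p * m) | ~~ (p %| d)%N) F d =
  \sum_(d <- divisors m | ~~ (p %| d)%N) F d.
Proof.
move=> p_pr m_gt0; have pm_gt0 : (0 < p * m)%N by rewrite muln_gt0 prime_gt0.
rewrite -big_filter -[RHS]big_filter; apply/perm_big/uniq_perm => [||d].
- by rewrite filter_uniq ?divisors_uniq.
- by rewrite filter_uniq ?divisors_uniq.
rewrite !mem_filter -!dvdn_divisors //; case: (boolP (p %| d)%N) => //= p_ndvd_d.
by rewrite Gauss_dvdr // coprime_sym prime_coprime.
Qed.

End BigDivisors.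

Lemma sum_mobius_divisors m :
  (0 < m)%N -> \sum_(d <- divisors m) mobius d = (m == 1%N)%:R.
Proof.
move=> m_gt0; have [m_le1|m_gt1] := leqP m 1.
  have -> : m = 1%N by apply/eqP; rewrite eqn_leq m_le1.
  by rewrite (_ : divisors 1 = [:: 1%N]) // big_seq1.
pose p := pdiv m; have p_pr : prime p by exact: pdiv_prime.
have [m' m_eq] : {m' | m = (p * m')%N}.
  by exists (m %/ p)%N; rewrite mulnC divnK ?pdiv_dvd.
have m'_gt0 : (0 < m')%N by move: m_gt0; rewrite m_eq muln_gt0 => /andP[].
rewrite gtn_eqF // m_eq (bigID (fun d => p %| d)%N) /= big_divisors_mul_ndvd //.
rewrite big_divisors_mul_dvd ?(prime_gt0 p_pr) // (bigID (fun d => p %| d)%N) /=.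
rewrite big1 => [|e]; last exact: mobius_mul_prime_dvd.
by rewrite add0r (eq_bigr _ (fun e => mobius_mul_prime p_pr)) sumrN addNr.
Qed.

Lemma sum_mobius_dvd m N : (0 < m)%N -> (m <= N)%N ->
  \sum_(k < N | (k.+1 %| m)%N) mobius k.+1 = (m == 1%N)%:R.
Proof.
move=> m_gt0 m_le_N.
rewrite -(big_mkord (fun k => k.+1 %| m)%N (fun k => mobius k.+1)).
rewrite -(big_add1 _ _ 0 N.+1 (fun k => k %| m)%N) -sum_mobius_divisors // -big_filter.
apply/perm_big/uniq_perm; rewrite ?filter_uniq ?divisors_uniq ?iota_uniq // => d.
rewrite mem_filter mem_index_iota -dvdn_divisors //.
case d_dvd: (d %| m)%N => //=.
by rewrite (dvdn_gt0 m_gt0 d_dvd) ltnS (leq_trans (dvdn_leq m_gt0 d_dvd)).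
Qed.

Section WeightedRedheffer.
Variables (R : fieldType) (f : nat -> R).
Hypothesis f_neq0 : forall k, f k.+1 != 0.

Definition weighted_redheffer n : 'M[R]_n :=
  \matrix_(i, j) if j.+1 == 1%N then 1 else if (i.+1 %| j.+1)%N then f i.+1 else 0.

Definition mobius_sum n : R := \sum_(i < n) (mobius i.+1)%:~R / f i.+1.

Definition mobius_elim n : 'M[R]_n.+1 :=
  \matrix_(i, j) if i == ord0 then (mobius j.+1)%:~R / f j.+1 else (i == j)%:R.

Lemma det_mobius_elim n : \det (mobius_elim n) = (f 1)^-1.
Proof.
rewrite -det_tr det_trig; last first.
  apply/is_trig_mxP => i j lt_ij; rewrite !mxE.
  have /negbTE-> : j != ord0 by apply: contraTneq lt_ij => ->.
  by rewrite gt_eqF.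
rewrite big_ord_recl big1 => [|i _]; last by rewrite !mxE eqxx.
by rewrite !mxE eqxx mul1r mulr1.
Qed.

Lemma mobius_elim_mul_row0 n j :
  (mobius_elim n *m weighted_redheffer n.+1) ord0 j = (j == ord0)%:R * mobius_sum n.+1.
Proof.
rewrite mxE /mobius_sum; case: (unliftP ord0 j) => [j'|] -> /=.
  rewrite mul0r (eq_bigr (fun k : 'I_n.+1 =>
    ((if (k.+1 %| j'.+2)%N then mobius k.+1 else 0)%:~R))) => [|k _].
    by rewrite -rmorph_sum -big_mkcond sum_mobius_dvd //=; exact: ltn_ord.
  by rewrite !mxE eqxx /=; case: ifP => _; rewrite ?mulr0 // mulfVK.
by rewrite mul1r; apply: eq_bigr => k _; rewrite !mxE eqxx mulr1.
Qed.

Lemma mobius_elim_mul_lift n i j :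
  (mobius_elim n *m weighted_redheffer n.+1) (lift ord0 i) j =
  weighted_redheffer n.+1 (lift ord0 i) j.
Proof.
have /negbTE lift_neq0 : lift ord0 i != ord0 by rewrite eq_sym neq_lift.
rewrite mxE (bigD1 (lift ord0 i)) //= big1 => [|k k_neq]; rewrite !mxE lift_neq0.
  by rewrite eqxx mul1r addr0.
by rewrite eq_sym (negbTE k_neq) mul0r.
Qed.

Lemma det_weighted_redheffer n :
  \det (weighted_redheffer n.+1) = (\prod_(i < n.+1) f i.+1) * mobius_sum n.+1.
Proof.
set A := weighted_redheffer n.+1; set B := mobius_elim n *m A.
have detB : \det B = (f 1)^-1 * \det A by rewrite det_mulmx det_mobius_elim.
have minor_trig : is_trig_mx (row' ord0 (col' ord0 B))^T.
  apply/is_trig_mxP => i j lt_ij; rewrite 3!mxE mobius_elim_mul_lift !mxE /=.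
  by case: ifP => // /(dvdn_leq (ltn0Sn _)); rewrite !ltnS leqNgt lt_ij.
have detB_expand : \det B = mobius_sum n.+1 * \prod_(i < n) f i.+2.
  rewrite (expand_det_row B ord0) big_ord_recl big1 => [|j _]; last first.
    by rewrite mobius_elim_mul_row0 mul0r mul0r.
  rewrite mobius_elim_mul_row0 eqxx mul1r addr0 /cofactor expr0 mul1r.
  rewrite -det_tr det_trig //; congr (_ * _); apply: eq_bigr => i _.
  by rewrite 3!mxE mobius_elim_mul_lift !mxE /= dvdnn.
apply: (mulfI (invr_neq0 (f_neq0 0))); rewrite -detB detB_expand big_ord_recl.
by rewrite -mulrA mulKf ?f_neq0 // mulrC.
Qed.

End WeightedRedheffer.

Lemma fibRedhefferE (R : fieldType) n :
  fibRedheffer R n = weighted_redheffer (fun k => (fib k)%:R) n.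
Proof. by []. Qed.

Lemma fib_gt0 k : (0 < fib k.+1)%N.
Proof. by elim: k => // -[|k] IHk //=; rewrite ltn_addr. Qed.

Lemma fib_binet (R : comPzRingType) (x y : R) k :
  x ^+ 2 = x + 1 -> x + y = 1 -> (x - y) * (fib k)%:R = x ^+ k - y ^+ k.
Proof.
move=> x_sqr xy1; have y_eq : y = 1 - x by rewrite -xy1 addrC addKr.
have y_sqr : y ^+ 2 = y + 1 by rewrite y_eq sqrrB x_sqr; ring.
suff : (x - y) * (fib k)%:R = x ^+ k - y ^+ k /\
       (x - y) * (fib k.+1)%:R = x ^+ k.+1 - y ^+ k.+1 by case.
elim: k => [|k [IHk IHk1]]; first by rewrite mulr0 !expr0 subrr mulr1 !expr1.
split=> //; have -> : fib k.+2 = (fib k.+1 + fib k)%N by [].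
rewrite natrD mulrDr IHk1 IHk.
by rewrite -[k.+2]addn2 -[k.+1]addn1 !exprD x_sqr y_sqr !expr1; ring.
Qed.

Lemma fib_ge_pow (R : realFieldType) n : (3/2) ^+ n <= (fib n.+2)%:R :> R.
Proof.
suff : (3/2) ^+ n <= (fib n.+2)%:R :> R /\ (3/2) ^+ n.+1 <= (fib n.+3)%:R :> R by case.
elim: n => [|n [IHn IHn1]]; first by rewrite expr0 expr1 /=; lra.
split=> //; have -> : fib n.+4 = (fib n.+3 + fib n.+2)%N by [].
have pow_ge0 : 0 <= (3/2) ^+ n :> R by rewrite exprn_ge0 //; lra.
by rewrite natrD !exprS in IHn1 *; nra.
Qed.

Lemma triangular_sum n : (\sum_(i < n) i.+1)%N = (n * n.+1)./2.
Proof.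
rewrite -(big_mkord xpredT succn) -[LHS]add0n -(big_nat_recl n 0 id) //.
by rewrite bin2_sum bin2 mulnC.
Qed.

Lemma cvgn_geometric_increments (R : realType) (V : completeNormedModType R)
    (u : V ^nat) (M r : R) :
  0 <= r < 1 -> (forall n, `|u n.+1 - u n| <= M * r ^+ n) -> cvgn u.
Proof.
move=> /andP[r_ge0 r_lt1] du_le.
have M_ge0 : 0 <= M by have := du_le 0%N; rewrite expr0 mulr1; apply: le_trans.
have -> : u = (fun n => u 0%N + series (telescope u) n).
  by apply/funext => n; exact: eq_sum_telescope.
apply: is_cvgD; first exact: is_cvg_cst.
apply: normed_cvg; apply: (@series_le_cvg _ _ (geometric M r)).
- by move=> n; exact: normr_ge0.
- by move=> n; exact: geometric_ge0.
- exact: du_le.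
- by apply: is_cvg_geometric_series; rewrite ger0_norm.
Qed.

Lemma cvg_limn_mul_ratio (R : realType) (u v : R ^nat) :
  cvgn u -> cvgn v -> limn u * limn v != 0 ->
  (fun n => limn u * limn v / (u n * v n)) @ \oo --> (1 : R).
Proof.
move=> u_cvg v_cvg uv_neq0; rewrite -(mulfV uv_neq0).
apply: cvgM; first exact: cvg_cst.
by apply: cvgV => //; apply: cvgM.
Qed.

Lemma prod_one_sub_ge (R : realDomainType) (a : nat -> R) n :
  (forall i, 0 <= a i <= 1) -> 1 - \sum_(i < n) a i <= \prod_(i < n) (1 - a i).
Proof.
move=> a01; elim: n => [|n IHn]; first by rewrite !big_ord0 subr0.
have a01_ge0 i : 0 <= 1 - a i by have := a01 i; rewrite subr_ge0 => /andP[].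
have P_ge0 : 0 <= \prod_(i < n) (1 - a i) by apply: prodr_ge0.
have P_le1 : \prod_(i < n) (1 - a i) <= 1.
  by apply: prodr_ile1 => i _; have := a01 i; rewrite a01_ge0 gerBl => /andP[].
have /andP[an_ge0 an_le1] := a01 n.
rewrite !big_ord_recr /=; nra.
Qed.

Lemma sum_geometric_le (R : realFieldType) (q : R) m n :
  0 <= q < 1 -> \sum_(i < n) q ^+ (i + m) <= q ^+ m / (1 - q).
Proof.
move=> /andP[q_ge0 q_lt1]; rewrite ler_pdivlMr ?subr_gt0 //.
have geom : (\sum_(i < n) q ^+ (i + m)) * (1 - q) = q ^+ m * (1 - q ^+ n).
  under eq_bigr do rewrite exprD mulrC.
  rewrite -mulr_sumr -mulrA; congr (_ * _).
  by rewrite -[RHS]opprB subrX1 -mulNr opprB mulrC.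
rewrite geom ler_piMr ?exprn_ge0 // gerBl exprn_ge0 //.
Qed.

Definition qpochhammer (R : pzRingType) (b : R) n : R := \prod_(i < n) (1 - b ^+ i.+1).

Lemma qpochhammer_bounds (R : realFieldType) (q : R) n :
  0 <= q <= 2/5 -> 1/3 <= qpochhammer (- q) n <= 3.
Proof.
move=> /andP[q_ge0 q_le]; rewrite /qpochhammer.
have qX01 k : 0 <= q ^+ k <= 1 by rewrite exprn_ge0 // exprn_ile1 //; lra.
have NqX k : - q ^+ k <= (- q) ^+ k <= q ^+ k.
  by rewrite -ler_norml normrX normrN ger0_norm.
have sum_le : \sum_(i < n) q ^+ i.+1 <= 2/3.
  under eq_bigr do rewrite -addn1.
  apply: le_trans (sum_geometric_le 1 n _) _; first by apply/andP; split; lra.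
  by rewrite expr1 ler_pdivrMr; lra.
have prod_ge : 1/3 <= \prod_(i < n) (1 - q ^+ i.+1).
  by apply: le_trans (prod_one_sub_ge n (fun i => qX01 i.+1)); lra.
have prod_le : \prod_(i < n) (1 + q ^+ i.+1) * \prod_(i < n) (1 - q ^+ i.+1) <= 1.
  by rewrite -big_split; apply: prodr_ile1 => i _ /=; have := qX01 i.+1; nra.
have lb : \prod_(i < n) (1 - q ^+ i.+1) <= \prod_(i < n) (1 - (- q) ^+ i.+1).
  by apply: ler_prod => i _; have := NqX i.+1; have := qX01 i.+1; lra.
have ub : \prod_(i < n) (1 - (- q) ^+ i.+1) <= \prod_(i < n) (1 + q ^+ i.+1).
  by apply: ler_prod => i _; have := NqX i.+1; have := qX01 i.+1; lra.
apply/andP; split; nra.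
Qed.

Section QPochhammerLimit.
Variables (R : realType) (q : R).
Hypothesis q_bounds : 0 <= q <= 2/5.

Lemma cvgn_qpochhammer : cvgn (qpochhammer (- q)).
Proof.
have /andP[q_ge0 q_le] := q_bounds.
apply: (@cvgn_geometric_increments _ _ _ 3 q) => [|n]; first by apply/andP; split; lra.
rewrite {1}/qpochhammer big_ord_recr /= -/(qpochhammer (- q) n).
rewrite mulrBr mulr1 addrAC subrr add0r normrN normrM normrX normrN (ger0_norm q_ge0).
have /andP[P_ge P_le] := qpochhammer_bounds n q_bounds.
rewrite ger0_norm ?exprS ?mulrA; last lra.
have : qpochhammer (- q) n * q <= 3 by nra.
have := exprn_ge0 n q_ge0; nra.
Qed.

Lemma limn_qpochhammer_ge : 1/3 <= limn (qpochhammer (- q)).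
Proof.
apply: (cvgr_to_ge cvgn_qpochhammer); apply: nearW => n.
by have /andP[] := qpochhammer_bounds n q_bounds.
Qed.

End QPochhammerLimit.

Section MobiusFibonacciSum.
Variable R : realFieldType.
Local Notation fibR := (fun k => (fib k)%:R : R).

Lemma mobius_fib_term_le n :
  `|(mobius n.+1)%:~R / (fib n.+1)%:R : R| <= 3/2 * (2/3) ^+ n.
Proof.
have fib_inv_le : (fib n.+1)%:R^-1 <= 3/2 * (2/3) ^+ n :> R.
  case: n => [|n]; first by rewrite invr1 expr0; lra.
  rewrite exprS mulrA (_ : 3/2 * (2/3) = 1 :> R) ?mul1r; last by field.
  rewrite -invf_div exprVn lef_pV2 ?posrE ?ltr0n ?fib_gt0 ?fib_ge_pow //
    exprn_gt0 //; lra.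
rewrite normrM normfV normr_nat; apply: le_trans fib_inv_le.
by rewrite ler_piMl ?invr_ge0 ?ler0n ?norm_mobius_le1.
Qed.

Lemma mobius_fib_sum_le n : (6 <= n)%N -> mobius_sum fibR n <= -1/10.
Proof.
move=> /subnK <-; set m := (n - 6)%N; rewrite addnC /mobius_sum big_split_ord.
have head6 : \sum_(i < 6) (mobius (lshift m i).+1)%:~R / (fib (lshift m i).+1)%:R
             = -23/40 :> R.
  rewrite !big_ord_recr big_ord0 /=.
  have [-> -> ->] : [/\ mobius 1 = 1, mobius 2 = -1 & mobius 3 = -1] by [].
  have [-> -> ->] : [/\ mobius 4 = 0, mobius 5 = -1 & mobius 6 = 1] by [].
  by field.
have tail : \sum_(i < m) (mobius (rshift 6 i).+1)%:~R / (fib (rshift 6 i).+1)%:R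
            <= 3/2 * \sum_(i < m) (2/3) ^+ (i + 6) :> R.
  rewrite mulr_sumr; apply: ler_sum => i _; rewrite (addnC i).
  exact: le_trans (ler_norm _) (mobius_fib_term_le _).
have geom : \sum_(i < m) (2/3 : R) ^+ (i + 6) <= (2/3) ^+ 6 / (1 - 2/3).
  by apply: sum_geometric_le; apply/andP; split; lra.
rewrite (_ : (2/3) ^+ 6 / (1 - 2/3) = 64/243 :> R) in geom; last first.
  by rewrite !exprS expr0; field.
rewrite head6; apply: le_trans (lerD (lexx _) tail) _; lra.
Qed.

End MobiusFibonacciSum.

Section MobiusFibonacciLimit.
Variable R : realType.
Local Notation fibR := (fun k => (fib k)%:R : R).

Lemma cvgn_mobius_fib_sum : cvgn (mobius_sum fibR).
Proof.
apply: (@cvgn_geometric_increments _ _ _ (3/2) (2/3)) => [|n].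
  by apply/andP; split; lra.
by rewrite /mobius_sum big_ord_recr /= addrC addrK mobius_fib_term_le.
Qed.

Lemma limn_mobius_fib_sum_le : limn (mobius_sum fibR) <= -1/10.
Proof.
apply: (cvgr_to_le cvgn_mobius_fib_sum); near=> n; apply: mobius_fib_sum_le.
by near: n; exists 6%N.
Unshelve. all: by end_near. Qed.

End MobiusFibonacciLimit.

Section GoldenRatio.
Variable R : realType.
Local Notation phi := (golden R).
Local Notation sqrt5 := (Num.sqrt (5 : R)).

Lemma sqrt5_ge : 11/5 <= sqrt5.
Proof.
have := sqr_sqrtr (ler0n R 5); have := sqrtr_ge0 (5 : R); rewrite expr2; nra.
Qed.

Lemma golden_sqr : phi ^+ 2 = phi + 1.
Proof. by rewrite /golden expr_div_n sqrrD sqr_sqrtr ?ler0n //; field. Qed.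

Lemma golden_ge : 8/5 <= phi.
Proof. by have := sqrt5_ge; rewrite /golden; lra. Qed.

Lemma golden_neq0 : phi != 0.
Proof. by apply/eqP; have := golden_ge; lra. Qed.

Lemma golden_invX2_bounds : 0 <= phi ^- 2 <= 2/5.
Proof.
have phi_ge := golden_ge; rewrite invr_ge0 exprn_ge0 /=; last lra.
by rewrite golden_sqr invf_ple ?posrE; lra.
Qed.

Lemma fib_golden k : (fib k)%:R = phi ^+ k / sqrt5 * (1 - (- phi ^- 2) ^+ k).
Proof.
have sqrt5_neq0 : sqrt5 != 0 by apply/eqP; have := sqrt5_ge; lra.
have conj_golden : 1 - phi = phi * (- phi ^- 2).
  apply: (mulfI golden_neq0); rewrite mulrA -expr2 mulrN mulfV ?expf_neq0 ?golden_neq0 //.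
  by rewrite mulrBr mulr1 -expr2 golden_sqr; ring.
have := fib_binet k golden_sqr (subrKC phi 1).
rewrite (_ : phi - (1 - phi) = sqrt5) => [binet|]; last by rewrite /golden; field.
apply: (mulfI sqrt5_neq0); rewrite binet conj_golden [(phi * _) ^+ _]exprMn; field.
exact: sqrt5_neq0.
Qed.

Lemma det_fibRedheffer n :
  \det (fibRedheffer R n.+1) =
  phi ^+ (n.+1 * n.+2)./2 / sqrt5 ^+ n.+1 *
  (mobius_sum (fun k => (fib k)%:R) n.+1 * qpochhammer (- phi ^- 2) n.+1).
Proof.
have fib_neq0 k : (fib k.+1)%:R != 0 :> R by rewrite pnatr_eq0 -lt0n fib_gt0.
rewrite fibRedhefferE (det_weighted_redheffer fib_neq0).
under eq_bigr do rewrite fib_golden.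
rewrite !big_split [in LHS]/= prodrXr triangular_sum prodr_const card_ord exprVn.
set X := phi ^+ _ / _; rewrite -/(qpochhammer _ _).
by rewrite [RHS]mulrA mulrAC.
Qed.

Lemma fibRedheffer_ratio (c : R) n :
  c * phi ^+ (n.+1 * n.+2)./2 * (sqrt5 ^+ n.+1)^-1 / \det (fibRedheffer R n.+1) =
  c / (mobius_sum (fun k => (fib k)%:R) n.+1 * qpochhammer (- phi ^- 2) n.+1).
Proof.
rewrite det_fibRedheffer -[c * _ * _]mulrA; set X := phi ^+ _ / _.
by rewrite invfM mulrA mulfK // mulf_neq0 ?expf_neq0 ?invr_neq0 ?golden_neq0.
Qed.

End GoldenRatio.

Theorem theorem3 (R : realType) :
  exists C : R,
    (fun n : nat => \sum_(1 <= k < n.+1) (mobius k)%:~R / (fib k)%:R) @ \oo --> C /\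
  exists Cphi : R,
    (fun n : nat => \prod_(1 <= k < n.+1) (1 - (- (golden R)^-2) ^+ k)) @ \oo --> Cphi /\
    (fun n : nat =>
       (C * Cphi * golden R ^+ (n * n.+1)./2 * (Num.sqrt (5:R) ^+ n)^-1)
         / \det (fibRedheffer R n)) @ \oo --> (1 : R).
Proof.
set S := mobius_sum (fun k => (fib k)%:R : R).
set P := qpochhammer (- golden R ^- 2).
have -> : (fun n => \sum_(1 <= k < n.+1) (mobius k)%:~R / (fib k)%:R) = S.
  by apply/funext => n; rewrite big_add1 big_mkord.
have -> : (fun n => \prod_(1 <= k < n.+1) (1 - (- golden R ^- 2) ^+ k)) = P.
  by apply/funext => n; rewrite big_add1 big_mkord.
exists (limn S); split; first exact: cvgn_mobius_fib_sum.
exists (limn P); split; first exact/cvgn_qpochhammer/golden_invX2_bounds.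
have C_neq0 : limn S != 0 by apply/eqP => C0; have := limn_mobius_fib_sum_le R; lra.
have Cphi_neq0 : limn P != 0.
  by apply/eqP => Cphi0; have := limn_qpochhammer_ge (golden_invX2_bounds R); lra.
have ratio_cvg := cvg_limn_mul_ratio (@cvgn_mobius_fib_sum R)
  (cvgn_qpochhammer (golden_invX2_bounds R)) (mulf_neq0 C_neq0 Cphi_neq0).
(* The closed form of the determinant is only valid from n = 1 on. *)
rewrite -cvg_shiftS; rewrite -cvg_shiftS in ratio_cvg.
apply: cvg_trans ratio_cvg; apply: near_eq_cvg; apply: nearW => n.
exact/esym/fibRedheffer_ratio.
Qed.
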